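(* Assume the event $\mathcal{E}$ holds. Then the radius used by ILESS satisfies $$\sigma_{\mathrm{ILESS}} \le 6\frac{A}{m} + 3\sqrt{\frac{A}{m}\, R(f^* )} = O\!\left(\frac{A}{m} + \sqrt{\frac{A}{m}\, R(f^* )}\right),$$ where $f^*$ is any true risk minimizer in $\mathcal{F}$.
   Context: Let $\mathcal{F}$ be a hypothesis class of binary classifiers $\mathcal{X}\to\{\pm1\}$ with finite VC dimension $d$. Let $\mathcal{P}_{X,Y}$ be an unknown distribution on $\mathcal{X}\times\{\pm1\}$, and let $S_m$ be an i.i.d. sample of size $m$ from it. With the 0/1 loss, $R(f)=\Pr(f(X)\neq Y)$ is the true risk and $\hat R(f)=\hat R(f,S_m)$ is the empirical risk on $S_m$. $\hat f$ is an empirical risk minimizer over $\mathcal{F}$, and $f^*$ is a true risk minimizer over $\mathcal{F}$ (assumed to exist). Fix a confidence parameter $0<\delta<1$ and set $A \triangleq 4d\ln\!\big(\tfrac{16me}{d\delta}\big)$. The event $\mathcal{E}$ is the event that, simultaneously for every $f\in\mathcal{F}$, both of the following hold: $$R(f)\le \hat R(f)+\min\Big\{\tfrac{A}{m}+\sqrt{\tfrac{A}{m}\hat R(f)},\ \sqrt{\tfrac{A}{m}R(f)}\Big\},$$ $$\hat R(f)\le R(f)+\min\Big\{\tfrac{A}{m}+\sqrt{\tfrac{A}{m}R(f)},\ \sqrt{\tfrac{A}{m}\hat R(f)}\Big\}.$$ This event has probability at least $1-\delta$ (a uniform convergence bound of Dasgupta et al., based on Bousquet et al., combined with Sauer's lemma).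 The radius used by ILESS is $$\sigma_{\mathrm{ILESS}}=\frac{A}{m}+\sqrt{\frac{A}{m}\hat R(\hat f)}+\frac{A}{m}+\sqrt{\frac{A}{m}\Big[\hat R(\hat f)+\frac{A}{m}+\sqrt{\frac{A}{m}\hat R(\hat f)}\Big]}.$$ *)

From mathcomp Require Import all_boot all_order all_algebra.
From mathcomp Require Import all_classical all_reals all_analysis.

Set Implicit Arguments.
Unset Strict Implicit.
Unset Printing Implicit Defensive.

Import Order.TTheory GRing.Theory Num.Theory.
Local Open Scope classical_set_scope.
Local Open Scope ring_scope.

(* Labels {+1,-1} are encoded as bool (true = +1, false = -1).
   A classifier is a function X -> bool; a hypothesis class is a set of them. *)

Definition true_risk (R : realType) (d : measure_display) (X : measurableType d)
  (P : probability (X * bool)%type R) (f : X -> bool) : R :=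
  fine (P [set z | f z.1 != z.2]).

Definition emp_risk (R : realType) (X : Type) (S : seq (X * bool)) (f : X -> bool) : R :=
  (count (fun z => f z.1 != z.2) S)%:R / (size S)%:R.

Definition shatters (X : eqType) (F : set (X -> bool)) (s : seq X) : Prop :=
  uniq s /\
  forall lab : seq bool, size lab = size s -> exists2 f, F f & map f s = lab.

Definition VC_dim (X : eqType) (F : set (X -> bool)) (d : nat) : Prop :=
  (exists s : seq X, size s = d /\ shatters F s) /\
  (forall s : seq X, shatters F s -> (size s <= d)%N).

Definition A_const (R : realType) (m d : nat) (delta : R) : R :=
  4 * d%:R * ln (16 * m%:R * expR 1 / (d%:R * delta)).

Definition event_E (R : realType) (X : Type) (F : set (X -> bool))
  (Rf Rh : (X -> bool) -> R) (a : R) : Prop :=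
  forall f, F f ->
    Rf f <= Rh f + Num.min (a + Num.sqrt (a * Rh f)) (Num.sqrt (a * Rf f)) /\
    Rh f <= Rf f + Num.min (a + Num.sqrt (a * Rf f)) (Num.sqrt (a * Rh f)).

(* sigma_ILESS, as a function of a = A/m and rh = \hat R(\hat f). *)
Definition sigma_ILESS (R : realType) (a rh : R) : R :=
  a + Num.sqrt (a * rh) + a + Num.sqrt (a * (rh + a + Num.sqrt (a * rh))).

(* On the event E the empirical risk of the ERM is at most that of a true
   risk minimizer, hence at most b + a + sqrt(a b), where a = A/m and b is the
   minimal true risk.  This is below (sqrt b + sqrt a)^2, so
   sqrt(a \hat R(\hat f)) <= sqrt(a b) + a; the argument of the last square
   root in sigma_ILESS is then below (sqrt b + 2 sqrt a)^2, and summing gives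
   sigma_ILESS <= 5a + 2 sqrt(a b).  That a = A/m is nonnegative is not
   automatic (the logarithm in A may be negative), but it follows from E:
   for a < 0 all square roots in E vanish and its two inequalities add
   up to 0 <= 2a. *)

From mathcomp Require Import all_boot all_order all_algebra.
From mathcomp Require Import all_classical all_reals all_analysis.
From mathcomp Require Import ring lra.

Set Implicit Arguments.
Unset Strict Implicit.
Unset Printing Implicit Defensive.
Import Order.TTheory GRing.Theory Num.Theory.
Local Open Scope classical_set_scope.
Local Open Scope ring_scope.

Lemma emp_risk_ge0 (R : realType) (X : Type) (S : seq (X * bool)) (f : X -> bool) :
  0 <= emp_risk R S f.
Proof. by rewrite /emp_risk divr_ge0. Qed.

Lemma true_risk_ge0 (R : realType) (d : measure_display) (X : measurableType d)
  (P : probability (X * bool)%type R) (f : X -> bool) : 0 <= true_risk P f.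
Proof. by rewrite /true_risk fine_ge0. Qed.

Section EventE.
Variables (R : realType) (X : Type) (F : set (X -> bool)).
Variables (Rf Rh : (X -> bool) -> R) (a : R).
Hypothesis E : event_E F Rf Rh a.

Lemma event_E_ge0 (f : X -> bool) : F f -> 0 <= Rf f -> 0 <= Rh f -> 0 <= a.
Proof.
move=> Ff Rf0 Rh0; rewrite leNgt; apply/negP => a_lt0.
have sqrt_a0 x : 0 <= x -> Num.sqrt (a * x) = 0.
  by move=> x0; apply: ler0_sqrtr; rewrite mulr_le0_ge0 // ltW.
have [] := E Ff; rewrite !sqrt_a0 // addr0.
have : Num.min a 0 <= a by rewrite ge_min lexx.
lra.
Qed.

Lemma event_E_emp_le (f : X -> bool) :
  F f -> Rh f <= Rf f + a + Num.sqrt (a * Rf f).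
Proof.
move=> Ff; have [_ Rh_le] := E Ff.
by rewrite -addrA (le_trans Rh_le) // lerD2l ge_min lexx.
Qed.

End EventE.

Lemma sqrt_mul_le_sqr (R : rcfType) (a b c x : R) :
  0 <= a -> 0 <= c -> x <= (Num.sqrt b + c * Num.sqrt a) ^+ 2 ->
  Num.sqrt (a * x) <= Num.sqrt a * Num.sqrt b + c * a.
Proof.
move=> a0 c0 x_le.
have -> : c * a = Num.sqrt a * (c * Num.sqrt a).
  by rewrite mulrCA -expr2 sqr_sqrtr.
rewrite sqrtrM // -mulrDr.
apply: ler_wpM2l; first exact: sqrtr_ge0.
apply: le_trans (ler_wsqrtr x_le) _.
by rewrite sqrtr_sqr ger0_norm // addr_ge0 ?mulr_ge0 ?sqrtr_ge0.
Qed.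

Lemma sigma_ILESS_le (R : realType) (a b rh : R) :
  0 <= a -> 0 <= b -> rh <= b + a + Num.sqrt (a * b) ->
  sigma_ILESS a rh <= 6 * a + 3 * Num.sqrt (a * b).
Proof.
move=> a0 b0 rh_le; rewrite /sigma_ILESS.
have sqrt_ab : Num.sqrt (a * b) = Num.sqrt a * Num.sqrt b by rewrite sqrtrM.
have st0 : 0 <= Num.sqrt a * Num.sqrt b by rewrite mulr_ge0 ?sqrtr_ge0.
have sqr_expand c : (Num.sqrt b + c * Num.sqrt a) ^+ 2
    = b + 2 * c * (Num.sqrt a * Num.sqrt b) + c ^+ 2 * a.
  by rewrite sqrrD exprMn !sqr_sqrtr //; ring.
rewrite sqrt_ab in rh_le *.
have q_le : Num.sqrt (a * rh) <= Num.sqrt a * Num.sqrt b + 1 * a.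
  by apply: sqrt_mul_le_sqr; rewrite ?sqr_expand; lra.
have : Num.sqrt (a * (rh + a + Num.sqrt (a * rh)))
    <= Num.sqrt a * Num.sqrt b + 2 * a.
  by apply: sqrt_mul_le_sqr; rewrite ?sqr_expand; lra.
lra.
Qed.

Theorem lemma4 (R : realType) (dX : measure_display) (X : measurableType dX)
  (F : set (X -> bool)) (d : nat) (P : probability (X * bool)%type R)
  (m : nat) (S : seq (X * bool)) (delta : R) (fhat fstar : X -> bool) :
  VC_dim F d ->
  (0 < m)%N -> size S = m ->
  0 < delta < 1 ->
  F fhat -> (forall f, F f -> emp_risk R S fhat <= emp_risk R S f) ->
  F fstar -> (forall f, F f -> true_risk P fstar <= true_risk P f) ->
  event_E F (true_risk P) (emp_risk R S) (A_const m d delta / m%:R) ->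
  sigma_ILESS (A_const m d delta / m%:R) (emp_risk R S fhat)
    <= 6 * (A_const m d delta / m%:R)
       + 3 * Num.sqrt (A_const m d delta / m%:R * true_risk P fstar).
Proof.
move=> _ _ _ _ Ffhat fhat_min Ffstar _ E.
have a0 := event_E_ge0 E Ffhat (true_risk_ge0 P fhat) (emp_risk_ge0 R S fhat).
apply: sigma_ILESS_le a0 (true_risk_ge0 P fstar) _.
exact: le_trans (fhat_min _ Ffstar) (event_E_emp_le E Ffstar).
Qed.
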